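(* The family $\mathcal{T}_n \subset 2^{\binom{[n]}{2}}$ of all labelled spanning trees of $K_n$ (identified with their edge sets) is $(n/2, n-1)$-spread.
   Context: For $\mathcal{F}\subset 2^{[m]}$ and $X\subset[m]$, $\mathcal{F}(X):=\{A\setminus X : A\in\mathcal{F},\ X\subset A\}$. For $r>1$, $\mathcal{F}$ is $r$-spread if $|\mathcal{F}(X)|\le r^{-|X|}|\mathcal{F}|$ for all $X\subset[m]$. $\mathcal{F}$ is $(r,t)$-spread if for every $T\subset[m]$ with $|T|\le t$ the family $\mathcal{F}(T)$ is $r$-spread, i.e. for every such $T$ and every $U$ with $T\subseteq U\subseteq[m]$, $|\mathcal{F}(U)|\le r^{-(|U|-|T|)}|\mathcal{F}(T)|$. Here $[m]$ is the ground set $\binom{[n]}{2}$ of edges of $K_n$. *)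

From mathcomp Require Import all_boot all_order all_algebra.
Set Implicit Arguments. Unset Strict Implicit. Unset Printing Implicit Defensive.
Import Order.TTheory GRing.Theory Num.Theory.

Definition edge (n : nat) := {e : {set 'I_n} | #|e| == 2}.

Definition adj (n : nat) (E : {set edge n}) : rel 'I_n :=
  fun u v => [exists e in E, val e == [set u; v]].

Definition connectedE (n : nat) (E : {set edge n}) : bool :=
  [forall u : 'I_n, forall v : 'I_n, connect (adj E) u v].

(* No cycle: no sequence of k >= 3 distinct vertices v0 ... v(k-1) with
   consecutive vertices adjacent and v(k-1) adjacent to v0.  (A sequence of
   distinct vertices has length <= n, so k ranges over 'I_n.+1.) *)
Definition acyclicE (n : nat) (E : {set edge n}) : bool :=
  [forall k : 'I_n.+1, forall s : k.-tuple 'I_n,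
     (3 <= k) && uniq s ==> ~~ cycle (adj E) s].

Definition is_spanning_tree (n : nat) (E : {set edge n}) : bool :=
  connectedE E && acyclicE E.

Definition spanning_trees (n : nat) : {set {set edge n}} :=
  [set E | is_spanning_tree E].

Definition link (T : finType) (F : {set {set T}}) (X : {set T}) : {set {set T}} :=
  [set A :\: X | A in [set A in F | X \subset A]].

Local Open Scope ring_scope.

Definition rspread (T : finType) (r : rat) (F : {set {set T}}) : Prop :=
  forall X : {set T}, (#|link F X|)%:R <= r ^- #|X| * (#|F|)%:R.

Definition rt_spread (T : finType) (r : rat) (t : nat) (F : {set {set T}}) : Prop :=
  forall S : {set T}, (#|S| <= t)%N -> rspread r (link F S).

From mathcomp Require Import all_boot all_order all_algebra.
Set Implicit Arguments. Unset Strict Implicit. Unset Printing Implicit Defensive.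

(* Let N(U) be the number of spanning trees containing U, and let e = uv be an
   edge outside U.  For a spanning tree T containing U and e, every vertex w lies
   in exactly one of the two components of T - e.  If w lies in the component
   of v, then T - e + uw is a spanning tree containing U from which (T, w) can
   be recovered; symmetrically if w lies in the component of u.  Hence
   n N(U + e) <= 2 N(U), and adding the edges of X one at a time gives
   N(S + X) <= (2/n)^|X| N(S) for X disjoint from S.  Since the link at X of
   the link at S is the link at S + X (and is empty when X meets S), this is
   the spread inequality for every link at S. *)

Lemma set2_eq (T : finType) (a b c d : T) :
  [set a; b] = [set c; d] -> (a = c /\ b = d) \/ (a = d /\ b = c).
Proof.
move=> abcd.
have ac : a \in [set c; d] by rewrite -abcd set21.
have bc : b \in [set c; d] by rewrite -abcd set22.
have ca : c \in [set a; b] by rewrite abcd set21.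
have da : d \in [set a; b] by rewrite abcd set22.
by move: ac bc ca da => /set2P[] ? /set2P[] ? /set2P[] ? /set2P[] ?; subst; auto.
Qed.

Section SpanningTrees.
Variable n : nat.
Implicit Types (A B E H T U : {set edge n}) (a b c p q u v w x y : 'I_n) (e f g : edge n).

Lemma adjC E : symmetric (adj E).
Proof. by move=> x y; rewrite /adj setUC. Qed.

Lemma connectC E x y : connect (adj E) x y = connect (adj E) y x.
Proof. exact: (sym_connect_sym (adjC E)). Qed.

Lemma adjP E a b : reflect (exists2 f, f \in E & val f = [set a; b]) (adj E a b).
Proof. by apply: (iffP exists_inP) => -[f fE /eqP]; exists f. Qed.

Lemma adj_subset A B : A \subset B -> subrel (adj A) (adj B).
Proof. by move=> AB a b /adjP[f fA fab]; apply/adjP; exists f => //; apply: (subsetP AB). Qed.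

Lemma connect_subset A B x y : A \subset B -> connect (adj A) x y -> connect (adj B) x y.
Proof. by move/adj_subset => AB; apply: connect_sub => a b /AB/connect1. Qed.

Lemma edge_neq g x y : val g = [set x; y] -> x != y.
Proof. by move=> gxy; have := valP g; rewrite gxy cards2; case: (x != y). Qed.

(* Empty when u = w, so that adding the edge uw needs no proof of u != w. *)
Definition edge1 u w := [set f : edge n | val f == [set u; w]].

Lemma adj_edge1 A u w : u != w -> adj (A :|: edge1 u w) u w.
Proof.
move=> uw; have uw2 : #|[set u; w]| == 2 by rewrite cards2 uw.
by apply/adjP; exists (exist _ [set u; w] uw2 : edge n); rewrite // !inE eqxx orbT.
Qed.

Lemma adj_setU_edge1 H p q a b :
  adj (H :|: edge1 p q) a b -> adj H a b \/ [set a; b] = [set p; q].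
Proof.
case/adjP=> f; rewrite !inE => /orP[fH | /eqP <-] fab; last by right.
by left; apply/adjP; exists f.
Qed.

Lemma connect_setU_edge1 E H p q x y :
  E \subset H :|: edge1 p q -> connect (adj E) x y ->
  [\/ connect (adj H) x y, connect (adj H) x p /\ connect (adj H) q y
    | connect (adj H) x q /\ connect (adj H) p y].
Proof.
move=> EH /(connect_subset EH)/connectP[s]; elim: s x => [|z s IH] x /=.
  by move=> _ ->; apply: Or31.
case/andP=> /adj_setU_edge1 xz /IH {}IH /IH.
case: xz => [/connect1 xz | /set2_eq[[-> ->]|[-> ->]]] [zy|[zp qy]|[zq py]].
- by apply: Or31; apply: connect_trans zy.
- by apply: Or32; split=> //; apply: connect_trans zp.
- by apply: Or33; split=> //; apply: connect_trans zq.
- by apply: Or32; rewrite connect0.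
- by apply: Or32.
- by apply: Or31.
- by apply: Or33; rewrite connect0.
- by apply: Or31.
- by apply: Or33.
Qed.

Lemma adj_avoid E c a b :
  adj E a b -> c != a -> c != b -> adj [set f in E | c \notin val f] a b.
Proof.
case/adjP=> f fE fab ca cb; apply/adjP; exists f => //.
by rewrite inE fE fab !inE negb_or ca cb.
Qed.

Lemma path_avoid E c x s :
  path (adj E) x s -> c \notin x :: s -> path (adj [set f in E | c \notin val f]) x s.
Proof.
elim: s x => [|y s IH] x //= /andP[xy ys].
rewrite !inE !negb_or => /and3P[cx cy cs].
by rewrite adj_avoid ?IH // inE negb_or cy.
Qed.

Lemma connect_avoid A B c x y :
  [set f in A | c \notin val f] \subset B -> ~~ connect (adj A) x c ->
  connect (adj A) x y -> connect (adj B) x y.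
Proof.
move=> AB xc /connectP[s xs ->]; apply/connectP; exists s => //.
apply: (sub_path (adj_subset AB) (path_avoid xs _)).
by apply: contra xc; apply: path_connect.
Qed.

Lemma acyclicEP E :
  reflect (forall s, 2 < size s -> uniq s -> ~~ cycle (adj E) s) (acyclicE E).
Proof.
apply: (iffP forallP) => [acyc s s3 us | acyc k]; last first.
  by apply/forallP=> t; apply/implyP=> /andP[]; rewrite -{1}(size_tuple t); apply: acyc.
have sn : size s < n.+1.
  by rewrite ltnS -(card_uniqP us); apply: leq_trans (max_card _) _; rewrite card_ord.
by move/forallP: (acyc (Ordinal sn)) => /(_ (in_tuple s)); rewrite s3 us.
Qed.

Lemma acyclicE_subset A B : A \subset B -> acyclicE B -> acyclicE A.
Proof.
move=> AB /acyclicEP acyc; apply/acyclicEP=> s s3 us.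
by apply: contra (acyc s s3 us); apply: (sub_cycle (adj_subset AB)).
Qed.

Definition bridge E g :=
  forall x y, val g = [set x; y] -> ~~ connect (adj (E :\ g)) x y.

Lemma acyclicE_bridge E g : acyclicE E -> g \in E -> bridge E g.
Proof.
move=> /acyclicEP acyc gE x y gxy; apply/negP=> /connectP[s0 xs0 y_last].
move: gxy; rewrite y_last; case: (shortenP xs0) => s xs us _ {s0 xs0 y_last}.
case: s xs us => [|z [|z' s]] xs us gxs.
- by have := edge_neq gxs; rewrite eqxx.
- case/andP: xs => /adjP[f]; rewrite !inE => /andP[fg _] fxz _.
  by move: fg; rewrite -gxs in fxz; rewrite (val_inj fxz) eqxx.
- apply/negP: (acyc (x :: z :: z' :: s) isT us).
  rewrite /cycle rcons_path (sub_path (adj_subset (subD1set E g)) xs) negbK adjC.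
  by apply/adjP; exists g.
Qed.

Lemma bridges_acyclicE E : {in E, forall g, bridge E g} -> acyclicE E.
Proof.
move=> bridgeE; apply/acyclicEP=> -[|x [|x1 [|z s]]] //= _.
rewrite !inE !negb_or => /andP[/and3P[xx1 xz xs] /andP[/andP[x1z x1s] uzs]].
apply/negP=> /and3P[/adjP[g gE gxx1] x1z_adj zsx].
have avoid_g c : c \in val g -> [set f in E | c \notin val f] \subset E :\ g.
  move=> cg; apply/subsetP=> f; rewrite !inE => /andP[-> cf].
  by rewrite andbT; apply: contraNneq cf => ->.
have x1_sx : x1 \notin z :: rcons s x.
  by rewrite inE mem_rcons !inE !negb_or x1z x1s eq_sym xx1.
apply: (negP (bridgeE g gE x x1 gxx1)); rewrite connectC.
have x_g : x \in val g by rewrite gxx1 set21.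
have x1_g : x1 \in val g by rewrite gxx1 set22.
apply: connect_trans (connect1 (adj_subset (avoid_g x x_g) (adj_avoid x1z_adj xx1 xz))) _.
apply: (connect_subset (avoid_g x1 x1_g)).
by apply/connectP; exists (rcons s x); [apply: path_avoid zsx x1_sx | rewrite last_rcons].
Qed.

Lemma acyclicE_setU_edge1 A u w :
  acyclicE A -> ~~ connect (adj A) u w -> acyclicE (A :|: edge1 u w).
Proof.
move=> acycA uw; apply: bridges_acyclicE => g gAuw x y gxy; apply/negP=> xy.
have [g_uw | g_nuw] := boolP (g \in edge1 u w).
  have sub : (A :|: edge1 u w) :\ g \subset A.
    apply/subsetP=> f; rewrite !inE => /andP[fg /orP[// | fuw]].
    by move: g_uw fg; rewrite inE -(eqP fuw) => /eqP/val_inj ->; rewrite eqxx.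
  move: g_uw xy; rewrite inE gxy => /eqP/set2_eq[[-> ->] | [-> ->]].
    by move/(connect_subset sub); apply/negP.
  by rewrite connectC => /(connect_subset sub); apply/negP.
have gA : g \in A by move: gAuw; rewrite inE (negbTE g_nuw) orbF.
have xyA : connect (adj A) x y by apply/connect1/adjP; exists g.
have sub : (A :|: edge1 u w) :\ g \subset (A :\ g) :|: edge1 u w.
  by rewrite setDUl setUS // subD1set.
have AgA : A :\ g \subset A := subD1set A g.
case: (connect_setU_edge1 sub xy) => [xy' | [xu wy] | [xw uy]].
- by move: xy'; apply/negP; apply: acyclicE_bridge.
- apply: (negP uw); rewrite connectC in xu; rewrite connectC in wy.
  exact: connect_trans (connect_subset AgA xu) (connect_trans xyA (connect_subset AgA wy)).
- apply: (negP uw); rewrite connectC in xyA.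
  exact: connect_trans (connect_subset AgA uy) (connect_trans xyA (connect_subset AgA xw)).
Qed.

Lemma connect_cut_edge T e u v w :
  connectedE T -> e \in T -> val e = [set u; v] ->
  connect (adj (T :\ e)) u w || connect (adj (T :\ e)) v w.
Proof.
move=> conT eT euv; have := forallP (forallP conT u) w.
have sub : T \subset (T :\ e) :|: edge1 u v.
  apply/subsetP=> f fT; rewrite !inE fT andbT.
  by case: eqVneq => [-> | //]; rewrite euv eqxx orbT.
by case/(connect_setU_edge1 sub) => [-> | [_ ->] | [_ ->]]; rewrite ?orbT.
Qed.

Lemma spanning_tree_exchange T e u v w :
  is_spanning_tree T -> e \in T -> val e = [set u; v] ->
  ~~ connect (adj (T :\ e)) u w -> is_spanning_tree ((T :\ e) :|: edge1 u w).
Proof.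
case/andP=> conT acycT eT euv uw; apply/andP; split; last first.
  by apply: acyclicE_setU_edge1 uw; apply: acyclicE_subset acycT; apply: subD1set.
have wv : connect (adj (T :\ e)) w v.
  by move: (connect_cut_edge w conT eT euv); rewrite (negbTE uw) connectC.
have u_ne_w : u != w by apply: contraNneq uw => <-; apply: connect0.
have sub : T :\ e \subset (T :\ e) :|: edge1 u w := subsetUl _ _.
have from_u a : connect (adj ((T :\ e) :|: edge1 u w)) u a.
  case/orP: (connect_cut_edge a conT eT euv) => [ua | va].
    exact: connect_subset sub ua.
  apply: connect_trans (connect1 (adj_edge1 _ u_ne_w)) _.
  exact: connect_subset sub (connect_trans wv va).
by apply/forallP=> a; apply/forallP=> b; apply: connect_trans (from_u b); rewrite connectC.
Qed.

Definition exchange e u (p : {set edge n} * 'I_n) := (p.1 :\ e) :|: edge1 u p.2.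

Definition trees_containing U := [set T in spanning_trees n | U \subset T].

Definition cut_pairs U e u := [set p : {set edge n} * 'I_n |
  (p.1 \in trees_containing (e |: U)) && ~~ connect (adj (p.1 :\ e)) u p.2].

Lemma in_cut_pairs U e u T w :
  ((T, w) \in cut_pairs U e u) =
  [&& is_spanning_tree T, e \in T, U \subset T & ~~ connect (adj (T :\ e)) u w].
Proof. by rewrite !inE subUset sub1set -!andbA. Qed.

Lemma setU_edge1K A u w :
  ~~ connect (adj A) u w -> (A :|: edge1 u w) :\: edge1 u w = A.
Proof.
move=> uw; rewrite setDUl setDv setU0; apply/setP=> f; rewrite !inE andb_idl // => fA.
by apply: contraNneq uw => fuw; apply/connect1/adjP; exists f.
Qed.

Lemma exchange_inj U e u v :
  val e = [set u; v] -> {in cut_pairs U e u &, injective (exchange e u)}.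
Proof.
move=> euv [T1 w1] [T2 w2]; rewrite !in_cut_pairs /exchange /=.
move=> /and4P[/andP[_ acyc1] eT1 _ uw1] /and4P[/andP[con2 acyc2] eT2 _ uw2] same.
have [w12 | w12] := eqVneq w1 w2.
  rewrite -w12 in uw2 same *.
  by rewrite -(setD1K eT1) -(setD1K eT2) -(setU_edge1K uw1) -(setU_edge1K uw2) same.
(* Otherwise uw2 is an edge of T1 - e, and the v-w2 path of T2 - e avoids u,
   so it lies in T1 - e and joins u to v there. *)
have u_ne_w2 : u != w2 by apply: contraNneq uw2 => <-; apply: connect0.
have uw2_T1 : adj (T1 :\ e) u w2.
  have := adj_edge1 (T2 :\ e) u_ne_w2; rewrite -same.
  case/adj_setU_edge1 => [// | /set2_eq[[_ w21] | [uw1' _]]].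
    by rewrite w21 eqxx in w12.
  by rewrite uw1' connect0 in uw1.
have avoid_u : [set f in T2 :\ e | u \notin val f] \subset T1 :\ e.
  apply/subsetP=> f; rewrite inE => /andP[fT2 uf].
  have : f \in (T2 :\ e) :|: edge1 u w2 by rewrite inE fT2.
  by rewrite -same !inE => /orP[-> // | /eqP fuw1]; rewrite fuw1 set21 in uf.
have vu2 : ~~ connect (adj (T2 :\ e)) v u.
  by rewrite connectC; apply: acyclicE_bridge acyc2 eT2 u v euv.
have vw2 : connect (adj (T2 :\ e)) v w2.
  by move: (connect_cut_edge w2 con2 eT2 euv); rewrite (negbTE uw2).
have vw2_T1 := connect_avoid avoid_u vu2 vw2.
have := acyclicE_bridge acyc1 eT1 euv; rewrite connectC in vw2_T1.
by rewrite (connect_trans (connect1 uw2_T1) vw2_T1).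
Qed.

Lemma card_cut_pairs U e u v :
  val e = [set u; v] -> e \notin U -> #|cut_pairs U e u| <= #|trees_containing U|.
Proof.
move=> euv eU; rewrite -(card_in_imset (exchange_inj euv)).
apply/subset_leq_card/subsetP=> _ /imsetP[[T w] Tw ->].
move: Tw; rewrite in_cut_pairs => /and4P[tree eT UT uw].
rewrite !inE (spanning_tree_exchange tree eT euv uw) /=.
by apply: subset_trans (subsetUl _ _); rewrite subsetD1 UT.
Qed.

Lemma cut_pairs_cover U e u v :
  val e = [set u; v] ->
  setX (trees_containing (e |: U)) [set: 'I_n] \subset cut_pairs U e u :|: cut_pairs U e v.
Proof.
move=> euv; apply/subsetP=> -[T w].
rewrite in_setX in_setT andbT in_setU !in_cut_pairs !inE subUset sub1set.
case/and3P=> tree eT UT; rewrite tree eT UT /= -negb_and.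
apply: contra (acyclicE_bridge (andP tree).2 eT euv) => /andP[uw vw].
by apply: connect_trans uw _; rewrite connectC.
Qed.

Lemma card_trees_containing_setU1 e U :
  e \notin U -> #|trees_containing (e |: U)| * n <= 2 * #|trees_containing U|.
Proof.
move=> eU; case/cards2P: (valP e) => u [v [_ euv]].
have evu : val e = [set v; u] by rewrite setUC.
have := subset_leq_card (cut_pairs_cover U euv); rewrite cardsX cardsT card_ord.
move/leq_trans; apply; apply: leq_trans (leq_card_setU _ _) _.
by rewrite mul2n -addnn leq_add // (card_cut_pairs euv, card_cut_pairs evu).
Qed.

End SpanningTrees.

Lemma leq_setU_geometric (T : finType) (f : {set T} -> nat) (a b : nat) :
  (forall x (U : {set T}), x \notin U -> f (x |: U) * a <= b * f U) ->
  forall S X : {set T}, [disjoint S & X] -> f (S :|: X) * a ^ #|X| <= b ^ #|X| * f S.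
Proof.
move=> step S X; move cardX : #|X| => k; elim: k X cardX => [|k IH] X cardX SX.
  by move/cards0_eq: cardX => ->; rewrite setU0 muln1 mul1n.
have [x xX] : exists x, x \in X by apply/set0Pn; rewrite -card_gt0 cardX.
have cardX' : #|X :\ x| = k by move: cardX; rewrite (cardsD1 x) xX => -[].
have SX' : [disjoint S & X :\ x] := disjointWr (subD1set X x) SX.
have xSX' : x \notin S :|: X :\ x by rewrite !inE eqxx (disjointFl SX xX).
rewrite -(setD1K xX) setUCA expnS mulnA.
apply: leq_trans (leq_mul (step _ _ xSX') (leqnn _)) _.
by rewrite -!mulnA expnS -mulnA leq_mul2l IH ?orbT.
Qed.

Lemma card_link (T : finType) (F : {set {set T}}) (S : {set T}) :
  #|link F S| = #|[set A in F | S \subset A]|.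
Proof.
apply: card_in_imset => A B; rewrite !inE => /andP[_ SA] /andP[_ SB] AB.
apply/setP=> x; have [xS | xS] := boolP (x \in S); first by rewrite (subsetP SA) ?(subsetP SB).
by have /setP/(_ x) := AB; rewrite !inE xS.
Qed.

Lemma link_link (T : finType) (F : {set {set T}}) (S X : {set T}) :
  [disjoint S & X] -> link (link F S) X = link F (S :|: X).
Proof.
move=> SX; apply/setP=> B; apply/imsetP/imsetP => [[C] | [A]].
  rewrite inE => /andP[/imsetP[A] + ->]; rewrite inE => /andP[AF SA] XAS ->.
  exists A; last by rewrite setDDl.
  by rewrite inE AF subUset SA (subset_trans XAS) ?subsetDl.
rewrite inE subUset => /andP[AF /andP[SA XA]] ->; exists (A :\: S); last by rewrite setDDl.
rewrite inE subsetD XA disjoint_sym SX !andbT.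
by apply: imset_f; rewrite inE AF SA.
Qed.

Lemma link_link_eq0 (T : finType) (F : {set {set T}}) (S X : {set T}) :
  ~~ [disjoint S & X] -> link (link F S) X = set0.
Proof.
move=> SX; apply/setP=> B; rewrite in_set0; apply/negP=> /imsetP[C].
rewrite inE => /andP[/imsetP[A _ ->]]; rewrite subsetD disjoint_sym => /andP[_].
by rewrite (negbTE SX).
Qed.

Local Open Scope ring_scope.
Import GRing.Theory Num.Theory.

Theorem lemma4p3 (n : nat) (hn : (2 < n)%N) :
  rt_spread ((n%:R : rat) / 2) n.-1 (spanning_trees n).
Proof.
(* The bound holds for every S. *)
move=> S _ X.
have [SX | SX] := boolP [disjoint S & X]; last first.
  by rewrite link_link_eq0 // cards0 mulr_ge0 // invr_ge0 exprn_ge0 // divr_ge0.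
rewrite link_link // !card_link.
have := leq_setU_geometric (@card_trees_containing_setU1 n) SX.
have n_gt0 : (0 : rat) < n%:R by rewrite ltr0n (ltn_trans _ hn).
rewrite expr_div_n invf_div mulrAC ler_pdivlMr ?exprn_gt0 //.
by rewrite -[2]/(2%:R) -!natrX -!natrM ler_nat.
Qed.
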